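(* Let $(G,k)$ be an instance of \textsc{Bicolored $P_3$ Deletion} and let $u,v,w,z_1,z_2$ be vertices such that $G[\{u,v,w,z_1,z_2\}]$ is a CC-Hourglass (with the vertex labels as in the definition). Then $(G,k)$ is a yes-instance if and only if at least one of $(G-\{v,w\},k-1)$, $(G-\{\{u,v\},\{v,z_1\}\},k-2)$, $(G-\{\{u,v\},\{u,z_1\},\{v,z_2\}\},k-3)$ is a yes-instance.
   Context: A two-colored graph $G=(V,E_r,E_b)$ is a finite simple undirected graph whose edge set $E=E_r\uplus E_b$ is partitioned into red and blue edges; $G-F$ removes the edges in $F$ (and $G-\{v,w\}$ removes the single edge $\{v,w\}$). A bicolored $P_3$ is an induced subgraph on three vertices $a,b,c$ with edges $\{a,b\},\{b,c\}$ of different colors and $\{a,c\}\notin E$. A CC-Hourglass on $u,v,w,z_1,z_2$ is an induced subgraph whose edges are exactly $\{u,v\}$ blue, $\{v,w\}$ red, $\{u,z_1\}$ blue, $\{v,z_1\}$ red, $\{v,z_2\}$ blue, $\{w,z_2\}$ red, or the same with the two colors swapped. \textsc{Bicolored $P_3$ Deletion}: given $G$ and an integer $k$, decide whether some $S\subseteq E$ with $|S|\le k$ makes $G-S$ free of induced bicolored $P_3$s (no-instance if $k<0$). *)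

From mathcomp Require Import all_boot all_order all_algebra.
Set Implicit Arguments. Unset Strict Implicit. Unset Printing Implicit Defensive.
Import GRing.Theory Num.Theory.

(* A two-colored graph on a finite vertex type T: red and blue edge sets,
   each edge an unordered pair {x,y} with x <> y (a 2-element set),
   and the two edge sets disjoint. *)
Record tcgraph (T : finType) := TCGraph {
  red : {set {set T}};
  blue : {set {set T}} }.

Definition wf_tcgraph (T : finType) (G : tcgraph T) : Prop :=
  (forall e, e \in red G :|: blue G -> #|e| = 2) /\
  [disjoint red G & blue G].

Definition edges (T : finType) (G : tcgraph T) : {set {set T}} := red G :|: blue G.

Definition del_edges (T : finType) (G : tcgraph T) (F : {set {set T}}) : tcgraph T :=
  TCGraph (red G :\: F) (blue G :\: F).

Definition bicolored_P3 (T : finType) (G : tcgraph T) (a b c : T) : Prop :=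
  [/\ a != b, b != c, a != c,
      (([set a; b] \in red G /\ [set b; c] \in blue G) \/
       ([set a; b] \in blue G /\ [set b; c] \in red G))
    & [set a; c] \notin edges G].

Definition P3_free (T : finType) (G : tcgraph T) : Prop :=
  forall a b c, ~ bicolored_P3 G a b c.

(* yes-instance of Bicolored P3 Deletion (no-instance when k < 0) *)
Definition yes_instance (T : finType) (G : tcgraph T) (k : int) : Prop :=
  exists S : {set {set T}}, S \subset edges G /\ (#|S|%:Z <= k)%R /\
    P3_free (del_edges G S).

Definition induced_exactly (T : finType) (G : tcgraph T) (X : {set T})
    (R B : {set {set T}}) : Prop :=
  forall x y, x \in X -> y \in X -> x != y ->
    ([set x; y] \in red G <-> [set x; y] \in R) /\
    ([set x; y] \in blue G <-> [set x; y] \in B).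

Definition cc_hourglass (T : finType) (G : tcgraph T) (u v w z1 z2 : T) : Prop :=
  uniq [:: u; v; w; z1; z2] /\
  let X := [set u; v; w; z1; z2] in
  let C1 := [set [set u; v]; [set u; z1]; [set v; z2]] in
  let C2 := [set [set v; w]; [set v; z1]; [set w; z2]] in
  induced_exactly G X C2 C1 \/ induced_exactly G X C1 C2.

From mathcomp Require Import all_boot all_order all_algebra.
From mathcomp Require Import zify.
Set Implicit Arguments. Unset Strict Implicit. Unset Printing Implicit Defensive.

(* A solution S must break the bicolored P3 u-v-w.  If it keeps vw it
   deletes uv; then either it deletes vz1, or it deletes vz2 (to break
   z1-v-z2) and also uz1, because u-z1-v becomes a bicolored P3 as soon as
   uv is gone.  So S contains one of the three branch sets, and deleting that
   set first costs exactly its size.  Conversely, a solution of a branch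
   together with the branch set is a solution of G. *)

Section Pairs.
Variable T : finType.

Lemma set2C (a b : T) : [set a; b] = [set b; a].
Proof. exact: setUC. Qed.

Lemma eq_set2 (a b c d : T) :
  ([set a; b] == [set c; d]) = (a == c) && (b == d) || (a == d) && (b == c).
Proof.
apply/eqP/idP=> [E | /orP[] /andP[/eqP-> /eqP->] //]; last exact: set2C.
have: [&& a \in [set c; d], b \in [set c; d], c \in [set a; b] & d \in [set a; b]].
  by rewrite -E set21 set22 E set21 set22.
rewrite !inE => /and4P[].
by do 4!case/orP=> /eqP ?; subst; rewrite ?eqxx ?orbT.
Qed.

Lemma neq_eqF (x y : T) : x != y -> ((x == y) = false) * ((y == x) = false).
Proof. by move=> xy; split; apply/negbTE; rewrite // eq_sym. Qed.

End Pairs.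

Section EdgeDeletion.
Variables (T : finType) (G : tcgraph T).

Lemma edges_del_edges (F : {set {set T}}) :
  edges (del_edges G F) = edges G :\: F.
Proof. by apply/setP=> e; rewrite !inE; case: (e \in F). Qed.

Lemma del_edgesU (F S : {set {set T}}) :
  del_edges (del_edges G F) S = del_edges G (S :|: F).
Proof.
by rewrite /del_edges /=; congr TCGraph; apply/setP=> e; rewrite !inE negb_or andbA.
Qed.

Lemma del_edgesDS (F S : {set {set T}}) :
  F \subset S -> del_edges (del_edges G F) (S :\: F) = del_edges G S.
Proof.
move=> FS; rewrite del_edgesU; congr del_edges.
apply/setP=> e; rewrite !inE.
by case: (boolP (e \in F)) => [/(subsetP FS e)->|]; rewrite ?orbF.
Qed.

Lemma bicolored_P3_edges a b c :
  bicolored_P3 G a b c -> [set a; b] \in edges G /\ [set b; c] \in edges G.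
Proof. by case=> _ _ _ [[ab bc] | [ab bc]] _; rewrite !inE ab bc ?orbT. Qed.

Lemma P3_free_del_hits (S : {set {set T}}) a b c :
  P3_free (del_edges G S) -> bicolored_P3 G a b c ->
  [set a; b] \in S \/ [set b; c] \in S.
Proof.
move=> freeS [ab bc ac colors nac].
case abS: ([set a; b] \in S); first by left.
case bcS: ([set b; c] \in S); first by right.
case: (freeS a b c); split=> //; first by rewrite /= !inE abS bcS.
by rewrite edges_del_edges inE negb_and nac orbT.
Qed.

Lemma yes_instance_del_edges (F : {set {set T}}) (n k : int) :
  F \subset edges G -> (#|F|%:Z = n)%R ->
  yes_instance (del_edges G F) (k - n)%R -> yes_instance G k.
Proof.
move=> FE <- [S [SE [Sk freeS]]]; exists (S :|: F); split; last split.
- rewrite subUset FE andbT (subset_trans SE) // edges_del_edges; exact: subsetDl.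
- have := leq_card_setU S F => -[cardSF _]; lia.
- by rewrite -del_edgesU.
Qed.

Lemma yes_instance_del_solution (S F : {set {set T}}) (n k : int) :
  S \subset edges G -> (#|S|%:Z <= k)%R -> P3_free (del_edges G S) ->
  F \subset S -> (#|F|%:Z = n)%R -> yes_instance (del_edges G F) (k - n)%R.
Proof.
move=> SE Sk freeS FS <-; exists (S :\: F); split; last split.
- by rewrite edges_del_edges setSD.
- have := subset_leq_card FS; rewrite cardsDS //; lia.
- by rewrite del_edgesDS.
Qed.

Lemma induced_exactlyE (X : {set T}) (R B : {set {set T}}) :
  induced_exactly G X R B ->
  (forall x y, x \in X -> y \in X -> x != y ->
     ([set x; y] \in red G) = ([set x; y] \in R)) /\
  (forall x y, x \in X -> y \in X -> x != y ->
     ([set x; y] \in blue G) = ([set x; y] \in B)).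
Proof.
move=> XRB; split=> x y xX yX xy; have [redE blueE] := XRB x y xX yX xy.
  by apply/idP/idP=> /redE.
by apply/idP/idP=> /blueE.
Qed.

End EdgeDeletion.

Section Hourglass.
Variables (T : finType) (G : tcgraph T) (u v w z1 z2 : T).

Lemma hourglass_solution_cases (S : {set {set T}}) :
  P3_free (del_edges G S) ->
  bicolored_P3 G u v w -> bicolored_P3 G z1 v z2 ->
  bicolored_P3 (del_edges G [set [set u; v]]) u z1 v ->
  [\/ [set [set v; w]] \subset S,
      [set [set u; v]; [set v; z1]] \subset S
    | [set [set u; v]; [set u; z1]; [set v; z2]] \subset S].
Proof.
move=> freeS P3uvw P3z1vz2 P3uz1v; rewrite sub1set.
have [vwS | vwNS] := boolP ([set v; w] \in S); first exact: Or31.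
have uvS : [set u; v] \in S.
  by case: (P3_free_del_hits freeS P3uvw); rewrite // (negbTE vwNS).
have [vz1S | vz1NS] := boolP ([set v; z1] \in S).
  by apply: Or32; rewrite subUset !sub1set uvS vz1S.
have vz2S : [set v; z2] \in S.
  by case: (P3_free_del_hits freeS P3z1vz2); rewrite // set2C (negbTE vz1NS).
have uz1S : [set u; z1] \in S.
  have uvF : [set [set u; v]] \subset S by rewrite sub1set.
  move: freeS; rewrite -(del_edgesDS _ uvF) => /P3_free_del_hits/(_ P3uz1v).
  by rewrite !inE (set2C z1) (negbTE vz1NS) andbF => -[/andP[]|].
by apply: Or33; rewrite !subUset !sub1set uvS uz1S vz2S.
Qed.

Hypotheses (uv : u != v) (uw : u != w) (uz1 : u != z1) (uz2 : u != z2)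
  (vw : v != w) (vz1 : v != z1) (vz2 : v != z2)
  (wz1 : w != z1) (wz2 : w != z2) (z1z2 : z1 != z2).

Let vertex_eqF := (neq_eqF uv, neq_eqF uw, neq_eqF uz1, neq_eqF uz2,
  neq_eqF vw, neq_eqF vz1, neq_eqF vz2, neq_eqF wz1, neq_eqF wz2, neq_eqF z1z2).

Lemma card_branch2 : #|[set [set u; v]; [set v; z1]]| = 2.
Proof. by rewrite cards2 eq_set2 !vertex_eqF. Qed.

Lemma card_branch3 : #|[set [set u; v]; [set u; z1]; [set v; z2]]| = 3.
Proof. by rewrite setUC cardsU1 cards2 !inE !eq_set2 !vertex_eqF ?eqxx. Qed.

Lemma hourglass_branching k :
  bicolored_P3 G u v w -> bicolored_P3 G z1 v z2 ->
  bicolored_P3 (del_edges G [set [set u; v]]) u z1 v ->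
  (yes_instance G k <->
    [\/ yes_instance (del_edges G [set [set v; w]]) (k - 1)%R,
        yes_instance (del_edges G [set [set u; v]; [set v; z1]]) (k - 2)%R
      | yes_instance (del_edges G [set [set u; v]; [set u; z1]; [set v; z2]]) (k - 3)%R]).
Proof.
move=> P3uvw P3z1vz2 P3uz1v; split.
  case=> S [SE [Sk freeS]].
  case: (hourglass_solution_cases freeS P3uvw P3z1vz2 P3uz1v) => FS;
    [apply: Or31 | apply: Or32 | apply: Or33];
    apply: yes_instance_del_solution SE Sk freeS FS _;
    by rewrite ?cards1 ?card_branch2 ?card_branch3.
have [uvE vwE] := bicolored_P3_edges P3uvw.
have [z1vE vz2E] := bicolored_P3_edges P3z1vz2.
have [+ _] := bicolored_P3_edges P3uz1v; rewrite edges_del_edges => /setDP[uz1E _].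
case=> yesF; apply: yes_instance_del_edges yesF;
  rewrite ?cards1 ?card_branch2 ?card_branch3 // ?subUset !sub1set.
- exact: vwE.
- by rewrite uvE (set2C v) z1vE.
- by rewrite uvE uz1E vz2E.
Qed.

Lemma cc_hourglass_P3 : cc_hourglass G u v w z1 z2 ->
  [/\ bicolored_P3 G u v w, bicolored_P3 G z1 v z2
    & bicolored_P3 (del_edges G [set [set u; v]]) u z1 v].
Proof.
case=> _ /=; set X := [set u; v; w; z1; z2].
have inX : (u \in X) * (v \in X) * (w \in X) * (z1 \in X) * (z2 \in X).
  by rewrite !inE !eqxx ?orbT.
case=> /induced_exactlyE[redE blueE];
  rewrite /bicolored_P3 /edges /= !inE !redE ?blueE ?inX ?vertex_eqF //
    !inE !eq_set2 !vertex_eqF ?eqxx /=;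
  split; split=> //; by [left | right].
Qed.

End Hourglass.

Theorem lemma7 (T : finType) (G : tcgraph T) (k : int) (u v w z1 z2 : T) :
  wf_tcgraph G ->
  cc_hourglass G u v w z1 z2 ->
  (yes_instance G k <->
    [\/ yes_instance (del_edges G [set [set v; w]]) (k - 1)%R,
        yes_instance (del_edges G [set [set u; v]; [set v; z1]]) (k - 2)%R
      | yes_instance (del_edges G [set [set u; v]; [set u; z1]; [set v; z2]]) (k - 3)%R]).
Proof.
move=> _ hourglass; case: (hourglass) => + _; rewrite /= !inE !negb_or.
case/and5P=> /and4P[uv uw uz1 uz2] /and3P[vw vz1 vz2] /andP[wz1 wz2] z1z2 _.
case: (cc_hourglass_P3 uv uw uz1 uz2 vw vz1 vz2 wz1 wz2 z1z2 hourglass).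
exact: hourglass_branching.
Qed.
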